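(* Let $n\ge p$, $\nu>0$, $\boldsymbol\eta=(\eta_1,\dots,\eta_p)\in\mathbb R^p$, and for $\boldsymbol d\in\mathbb R_+^p$ with $D=\mathrm{diag}(\boldsymbol d)$ set $$g(\boldsymbol d;\nu,\boldsymbol\eta)=\frac{\exp(\nu\,\boldsymbol\eta^T\boldsymbol d)}{\left[{}_0F_1\!\left(\tfrac n2,\tfrac{D^2}{4}\right)\right]^\nu}.$$ Then $\int_{\mathbb R_+^p}g(\boldsymbol d;\nu,\boldsymbol\eta)\,d\boldsymbol d<\infty$ if and only if $\max_{1\le j\le p}\eta_j<1$.
   Context: $\mathbb R_+^p=(0,\infty)^p$ with Lebesgue measure. $\mathcal V_{n,p}=\{X\in\mathbb R^{n\times p}:X^TX=I_p\}$ with normalized Haar probability measure $[dX]$; for diagonal $D$ with diagonal $\boldsymbol d$, ${}_0F_1\!\left(\tfrac n2,\tfrac{D^2}{4}\right)=\int_{\mathcal V_{n,p}}\exp\big(\sum_j d_jX_{jj}\big)[dX]$. *)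

From HB Require Import structures.
From mathcomp Require Import all_boot all_order all_algebra.
From mathcomp Require Import all_classical all_reals all_analysis.
Set Implicit Arguments. Unset Strict Implicit. Unset Printing Implicit Defensive.
Import Order.TTheory GRing.Theory Num.Theory.
Local Open Scope classical_set_scope.
Local Open Scope ring_scope.

(* n x p real matrices, represented as n rows, each a p-tuple; this type
   carries MathComp-Analysis's product sigma-algebra (Borel on R^{n*p}). *)
Notation rmat R n p := (n.-tuple (p.-tuple R)) (only parsing).

Definition mx_of (R : realType) (n p : nat) (t : rmat R n p) : 'M[R]_(n, p) :=
  \matrix_(i < n, j < p) tnth (tnth t i) j.

Definition rmat_of (R : realType) (n p : nat) (M : 'M[R]_(n, p)) : rmat R n p :=
  [tuple [tuple M i j | j < p] | i < n].

Definition stiefel (R : realType) (n p : nat) : set (rmat R n p) :=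
  [set t | (mx_of t)^T *m mx_of t = 1%:M].

(* mu is the normalized Haar (uniform) probability measure on V_{n,p}:
   a probability measure concentrated on V_{n,p} and invariant under
   X |-> Q X for every orthogonal Q in O(n).  Since O(n) acts transitively
   on V_{n,p}, such a measure is unique. *)
Definition stiefel_haar (R : realType) (n p : nat)
  (mu : probability (rmat R n p) R) : Prop :=
  mu.-negligible (~` @stiefel R n p) /\
  forall (Q : 'M[R]_n), Q^T *m Q = 1%:M ->
    forall A : set (rmat R n p), measurable A ->
      mu ((fun t => rmat_of (Q *m mx_of t)) @^-1` A) = mu A.

Definition diag_entry (R : realType) (n p : nat) (hnp : (p <= n)%N)
  (t : rmat R n p) (j : 'I_p) : R :=
  tnth (tnth t (widen_ord hnp j)) j.

(* 0F1(n/2; D^2/4) = \int_{V_{n,p}} exp(sum_j d_j X_jj) [dX] *)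
Definition hyp0F1 (R : realType) (n p : nat) (hnp : (p <= n)%N)
  (mu : probability (rmat R n p) R) (d : p.-tuple R) : \bar R :=
  (\int[mu]_(t in [set: rmat R n p])
     (expR (\sum_(j < p) tnth d j * diag_entry hnp t j))%:E)%E.

Definition g_fun (R : realType) (n p : nat) (hnp : (p <= n)%N)
  (mu : probability (rmat R n p) R) (nu : R) (eta d : p.-tuple R) : R :=
  expR (nu * \sum_(j < p) tnth eta j * tnth d j)
    / (fine (hyp0F1 hnp mu d)) `^ nu.

(* Lebesgue integral over R_+^p = (0,oo)^p of a nonnegative function,
   computed as the iterated integral (Tonelli) of one-dimensional Lebesgue
   integrals, since the library has no p-fold product Lebesgue measure on
   tuples. *)
Fixpoint int_Rplus (R : realType) (k : nat) : (k.-tuple R -> \bar R) -> \bar R :=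
  match k return (k.-tuple R -> \bar R) -> \bar R with
  | 0%N => fun f => f [tuple]
  | k'.+1 => fun f =>
      (\int[@lebesgue_measure R]_(x in `]0%R, +oo[)
          int_Rplus (fun t : k'.-tuple R => f [tuple of x :: t]))%E
  end.

From HB Require Import structures.
From mathcomp Require Import all_boot all_order all_algebra.
From mathcomp Require Import all_classical all_reals all_analysis.
From mathcomp Require Import measurable_realfun ring lra.
Import Order.TTheory GRing.Theory Num.Theory.
Set Implicit Arguments. Unset Strict Implicit. Unset Printing Implicit Defensive.
Local Open Scope classical_set_scope.
Local Open Scope ring_scope.

(* For d in R_+^p the integrand of 0F1 lies between exp(sum_j d_j), since the
   entries of X in V_{n,p} are bounded by 1, and c_e exp((1 - e) sum_j d_j),
   where c_e is the Haar mass of {X : X_jj >= 1 - e for all j}.  This mass is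
   positive: some small box around a point Y of V_{n,p} has positive mass, and
   an orthogonal Q built from Householder reflections maps Y to the canonical
   frame, hence the box into that set, so invariance transfers the mass.
   Raising to the power nu, g is squeezed between exp(nu sum_j (eta_j - 1) d_j)
   and a constant times exp(nu sum_j (eta_j - 1 + e) d_j); the iterated integral
   of exp(sum_j a_j d_j) over R_+^p is prod_j 1/(-a_j) if every a_j < 0 and +oo
   otherwise. *)

Section IteratedIntegrals.
Local Open Scope ereal_scope.

(* The nonnegative integral is a supremum over dominated simple functions,
   so it is monotone even for non-measurable integrands. *)
Lemma ge0_le_integral_nomeas d (T : measurableType d) (R : realType)
    (mu : {measure set T -> \bar R}) (D : set T) (f g : T -> \bar R) :
  (forall x, D x -> 0 <= f x) -> (forall x, D x -> f x <= g x) ->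
  \int[mu]_(x in D) f x <= \int[mu]_(x in D) g x.
Proof.
move=> f0 fg; have g0 x : D x -> 0 <= g x.
  by move=> Dx; exact: le_trans (f0 x Dx) (fg x Dx).
rewrite (ge0_integralE _ f0) (ge0_integralE _ g0).
apply: ereal_sup_le => _ [h hf <-]; exists h => //= x.
apply: le_trans (hf x) _; rewrite /patch; case: ifP => // /set_mem; exact: fg.
Qed.

Variable R : realType.

Definition positive_tuple k (d : k.-tuple R) := forall j, (0 < tnth d j)%R.

Lemma positive_tuple_cons k (x : R) (t : k.-tuple R) :
  (0 < x)%R -> positive_tuple t -> positive_tuple [tuple of x :: t].
Proof.
move=> x0 t0 j; case: (unliftP ord0 j) => [i ->|->]; first by rewrite tnthS.
by rewrite (tnth_nth x).
Qed.

Lemma int_Rplus_ge0 k (f : k.-tuple R -> \bar R) :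
  (forall d, positive_tuple d -> 0 <= f d) -> 0 <= int_Rplus f.
Proof.
elim: k f => [|k IH] f f0 /=; first by apply: f0 => -[].
apply: integral_ge0 => x; rewrite /= in_itv /= andbT => x0.
by apply: IH => t t0; apply: f0; exact: positive_tuple_cons.
Qed.

Lemma le_int_Rplus k (f g : k.-tuple R -> \bar R) :
  (forall d, positive_tuple d -> 0 <= f d) ->
  (forall d, positive_tuple d -> f d <= g d) -> int_Rplus f <= int_Rplus g.
Proof.
elim: k f g => [|k IH] f g f0 fg /=; first by apply: fg => -[].
apply: ge0_le_integral_nomeas => x; rewrite /= in_itv /= andbT => x0.
  by apply: int_Rplus_ge0 => t t0; apply: f0; exact: positive_tuple_cons.
by apply: IH => t t0; [apply: f0|apply: fg]; exact: positive_tuple_cons.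
Qed.

Definition int_expR_Rplus (a : R) :=
  \int[@lebesgue_measure R]_(x in `]0%R, +oo[) (expR (a * x)%R)%:E.

Lemma measurable_expRM (a : R) (D : set R) :
  measurable_fun D (fun x : R => (expR (a * x)%R)%:E).
Proof. by apply/measurable_EFinP; apply: measurableT_comp. Qed.

Lemma int_expR_Rplus_neg (a : R) : (a < 0)%R -> int_expR_Rplus a = ((- a)^-1)%:E.
Proof.
move=> a0; set r := (- a)%R; have r0 : (0 < r)%R by rewrite oppr_gt0.
rewrite /int_expR_Rplus integral_itv_obnd_cbnd; last exact: measurable_expRM.
transitivity (\int[lebesgue_measure]_(x in `[0%R, +oo[)
               ((r^-1)%:E * (r * expR (- r * x))%:E)).
  apply: eq_integral => x _; rewrite -EFinM mulrA mulVf ?gt_eqF// mul1r.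
  by rewrite /r opprK.
rewrite ge0_integralZl_EFin//; last 3 first.
- by move=> x _; rewrite lee_fin mulr_ge0 ?expR_ge0// ltW.
- by apply/measurable_EFinP; apply: measurable_funM => //; exact: measurableT_comp.
- by rewrite invr_ge0 ltW.
rewrite integral_mkcond (_ : _ \_ _ = fun x => (exponential_pdf r x)%:E).
  by rewrite integral_exponential_pdf// mule1.
by apply/funext => x; rewrite /exponential_pdf /patch; case: ifP.
Qed.

Lemma int_expR_Rplus_pinfty (a : R) : (0 <= a)%R -> int_expR_Rplus a = +oo.
Proof.
move=> a0; apply/eqP; rewrite eq_le leey /=.
have : \int[@lebesgue_measure R]_(x in `]0%R, +oo[) (1%R)%:E <= int_expR_Rplus a.
  apply: ge0_le_integral_nomeas => x; rewrite /= in_itv /= andbT => x0 //.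
  by rewrite lee_fin -expR0 ler_expR mulr_ge0// ltW.
apply: le_trans; rewrite integral_cst// mul1e.
by have := lebesgue_measure_itv `]0%R, +oo[%R; rewrite /= => ->; rewrite ltry.
Qed.

Lemma int_expR_Rplus_gt0 (a : R) : 0 < int_expR_Rplus a.
Proof.
have [a0|a0] := ltP a 0%R; last by rewrite int_expR_Rplus_pinfty.
by rewrite int_expR_Rplus_neg// lte_fin invr_gt0 oppr_gt0.
Qed.

Lemma int_Rplus_expR_sum k (a : nat -> R) (c : R) : (0 <= c)%R ->
  int_Rplus (fun d : k.-tuple R => (c * expR (\sum_(j < k) a j * tnth d j))%:E)
  = c%:E * \prod_(j < k) int_expR_Rplus (a j).
Proof.
elim: k a c => [|k IH] a c c0.
  by rewrite /= big_ord0 big_ord0 expR0 mulr1 mule1.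
transitivity (\int[@lebesgue_measure R]_(x in `]0%R, +oo[)
   ((c * expR (a 0%N * x))%:E * \prod_(j < k) int_expR_Rplus (a j.+1))).
  apply: eq_integral => x _ /=.
  rewrite -(IH (fun j => a j.+1)); last by rewrite mulr_ge0 ?expR_ge0.
  congr int_Rplus; apply/funext => t.
  rewrite big_ord_recl /= -mulrA -expRD; congr (_ * expR (_ + _))%:E.
  by apply: eq_bigr => i _; rewrite tnthS.
rewrite ge0_integralZr//; last 3 first.
- by apply/measurable_EFinP; apply: measurable_funM => //; exact: measurableT_comp.
- by move=> x _; rewrite lee_fin mulr_ge0 ?expR_ge0.
- by apply: prode_ge0 => i _; exact: ltW (int_expR_Rplus_gt0 _).
under eq_integral do rewrite EFinM.
rewrite ge0_integralZl_EFin//; first by rewrite big_ord_recl -muleA.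
exact: measurable_expRM.
Qed.

Lemma prod_int_expR_Rplus_gt0 k (a : nat -> R) :
  0 < \prod_(j < k) int_expR_Rplus (a j).
Proof.
elim: k a => [|k IH] a; first by rewrite big_ord0 lte01.
by rewrite big_ord_recl mule_gt0 ?int_expR_Rplus_gt0 ?(IH (fun j => a j.+1)).
Qed.

Lemma prod_int_expR_Rplus_lty k (a : nat -> R) :
  (forall j, (j < k)%N -> (a j < 0)%R) -> \prod_(j < k) int_expR_Rplus (a j) < +oo.
Proof.
move=> a0; rewrite (eq_bigr (fun j : 'I_k => ((- a j)^-1)%:E)).
  by rewrite prodEFin ltry.
by move=> j _; rewrite int_expR_Rplus_neg ?a0.
Qed.

Lemma prod_int_expR_Rplus_pinfty k (a : nat -> R) j :
  (j < k)%N -> (0 <= a j)%R -> \prod_(j < k) int_expR_Rplus (a j) = +oo.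
Proof.
elim: k a j => [|k IH] a [|j] //= jk aj; rewrite big_ord_recl.
  rewrite int_expR_Rplus_pinfty// gt0_mulye //.
  exact: (prod_int_expR_Rplus_gt0 _ (fun j => a j.+1)).
by rewrite (IH (fun j => a j.+1) j)// gt0_muley ?int_expR_Rplus_gt0.
Qed.

End IteratedIntegrals.

Section Householder.
Variable R : realFieldType.

Lemma sum_delta_mul n (j : 'I_n) (F : 'I_n -> R) :
  \sum_(i < n) ((i == j)%:R * F i) = F j.
Proof.
rewrite (bigD1 j) //= eqxx mul1r big1 ?addr0 // => i /negbTE ->.
by rewrite mul0r.
Qed.

Lemma sum_delta_nat_mul n k (F : 'I_n -> R) (kn : (k < n)%N) :
  \sum_(i < n) (((i : nat) == k)%:R * F i) = F (Ordinal kn).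
Proof. by rewrite -(sum_delta_mul (Ordinal kn)). Qed.

Definition orthonormal_cols m k (M : 'M[R]_(m, k)) := M^T *m M = 1%:M.

Lemma orthonormal_cols1 m : orthonormal_cols (1%:M : 'M[R]_m).
Proof. by rewrite /orthonormal_cols trmx1 mul1mx. Qed.

Lemma orthonormal_cols_mulmx m k (Q : 'M[R]_m) (M : 'M[R]_(m, k)) :
  orthonormal_cols Q -> orthonormal_cols M -> orthonormal_cols (Q *m M).
Proof.
rewrite /orthonormal_cols => oQ oM.
by rewrite trmx_mul -mulmxA (mulmxA Q^T) oQ mul1mx.
Qed.

Lemma orthonormal_colsP m k (M : 'M[R]_(m, k)) : orthonormal_cols M ->
  forall a b, \sum_l M l a * M l b = (a == b)%:R.
Proof.
move=> oM a b; have := congr1 (fun N : 'M[R]_k => N a b) oM; rewrite !mxE => <-.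
by apply: eq_bigr => l _; rewrite mxE.
Qed.

Lemma orthonormal_cols_entry_le1 m k (M : 'M[R]_(m, k)) : orthonormal_cols M ->
  forall a b, `|M a b| <= 1.
Proof.
move=> oM a b.
have : \sum_l M l b ^+ 2 = 1.
  transitivity ((b == b)%:R : R); last by rewrite eqxx.
  by rewrite -(orthonormal_colsP oM); apply: eq_bigr => l _; rewrite expr2.
rewrite (bigD1 a) //= => sum1.
have : M a b ^+ 2 <= 1.
  by rewrite -sum1 lerDl; apply: sumr_ge0 => l _; exact: sqr_ge0.
rewrite ler_norml; nra.
Qed.

Definition householder n (v : 'I_n -> R) : 'M[R]_n :=
  \matrix_(i, l) ((i == l)%:R - 2 / (\sum_m v m ^+ 2) * v i * v l).

Lemma householder_mulmx n k (v : 'I_n -> R) (Z : 'M[R]_(n, k)) i j :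
  (householder v *m Z) i j =
  Z i j - 2 / (\sum_m v m ^+ 2) * v i * \sum_l v l * Z l j.
Proof.
rewrite !mxE; under eq_bigr do rewrite !mxE mulrBl.
rewrite big_split /= sumrN; under eq_bigr do rewrite eq_sym.
by rewrite sum_delta_mul mulr_sumr; congr (_ - _); apply: eq_bigr => l _; ring.
Qed.

Lemma householder_orthogonal n (v : 'I_n -> R) :
  \sum_m v m ^+ 2 != 0 -> orthonormal_cols (householder v).
Proof.
set s := \sum_m _ => s0; apply/matrixP => i l.
rewrite mxE (eq_bigr (fun m => householder v m i * householder v m l)); last first.
  by move=> m _; rewrite mxE.
set c := 2 / s.
transitivity (\sum_m ((m == i)%:R * (m == l)%:R - (m == l)%:R * (c * v i * v m)
   - (m == i)%:R * (c * v l * v m) + (c * c * v i * v l) * v m ^+ 2)).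
  by apply: eq_bigr => m _; rewrite !mxE -/s -/c; ring.
rewrite !big_split /= !sumrN !sum_delta_mul -mulr_sumr -/s mxE.
have -> : c * c * v i * v l * s = 2 * (c * v i * v l) by rewrite /c; field.
ring.
Qed.

(* The reflection along z - e_k sends the unit column z to e_k and fixes the
   columns e_j, j < k, which are orthogonal to both. *)
Lemma householder_step n p (Z : 'M[R]_(n, p)) k (kp : (k < p)%N) (kn : (k < n)%N) :
  orthonormal_cols Z ->
  (forall (i : 'I_n) (j : 'I_p), (j < k)%N -> Z i j = ((i : nat) == j)%:R) ->
  exists Q : 'M[R]_n, orthonormal_cols Q /\
    forall (i : 'I_n) (j : 'I_p), (j <= k)%N -> (Q *m Z) i j = ((i : nat) == j)%:R.
Proof.
move=> oZ Zlow; pose jk := Ordinal kp; pose ik := Ordinal kn.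
pose z i := Z i jk; pose v i := z i - ((i : nat) == k)%:R.
have Z_ik (j : 'I_p) : (j < k)%N -> Z ik j = 0.
  by move=> jlt; rewrite Zlow //= gtn_eqF.
have v_dot (j : 'I_p) : \sum_l v l * Z l j = (jk == j)%:R - Z ik j.
  rewrite -(orthonormal_colsP oZ) -(sum_delta_nat_mul (Z^~ j) kn) -sumrB.
  by apply: eq_bigr => l _; rewrite /v /z; ring.
have [v0|v0] := eqVneq (\sum_m v m ^+ 2) 0.
  exists 1%:M; split => [|i j]; first exact: orthonormal_cols1.
  rewrite mul1mx leq_eqVlt => /orP[/eqP jk'|]; last exact: Zlow.
  have -> : j = jk by apply: val_inj.
  have /eqP := (psumr_eq0P (fun i _ => sqr_ge0 (v i)) v0) i isT.
  by rewrite sqrf_eq0 subr_eq0 => /eqP.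
have v_norm : \sum_m v m ^+ 2 = 2 * (1 - z ik).
  rewrite (eq_bigr (fun m => z m * z m - 2 * (((m : nat) == k)%:R * z m)
                            + ((m : nat) == k)%:R * ((m : nat) == k)%:R)).
    rewrite !big_split /= sumrN -mulr_sumr (orthonormal_colsP oZ jk jk)
      (sum_delta_nat_mul z kn)
      (sum_delta_nat_mul (fun i : 'I_n => ((i : nat) == k)%:R) kn).
    by rewrite /= !eqxx /=; ring.
  by move=> m _; rewrite /v; case: (_ == _); ring.
exists (householder v); split => [|i j]; first exact: householder_orthogonal.
rewrite householder_mulmx v_dot v_norm leq_eqVlt => /orP[/eqP jk'|jlt].
  have -> : j = jk by apply: val_inj.
  have z1 : 1 - z ik != 0 by apply: contraNneq v0 => z1; rewrite v_norm z1 mulr0.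
  by rewrite eqxx mulr1n /v /z /=; field.
have -> : jk == j = false by apply/negbTE; rewrite -val_eqE /= neq_ltn jlt orbT.
by rewrite Z_ik // subrr mulr0 subr0 Zlow.
Qed.

Lemma orthonormal_cols_to_canonical n p (Y : 'M[R]_(n, p)) : (p <= n)%N ->
  orthonormal_cols Y -> exists Q : 'M[R]_n, orthonormal_cols Q /\
    forall i j, (Q *m Y) i j = ((i : nat) == j)%:R.
Proof.
move=> pn oY.
have : forall k, (k <= p)%N -> exists Q : 'M[R]_n, orthonormal_cols Q /\
    forall i (j : 'I_p), (j < k)%N -> (Q *m Y) i j = ((i : nat) == j)%:R.
  elim=> [_|k IH kp]; first by exists 1%:M; split => //; exact: orthonormal_cols1.
  have [Q [oQ QY]] := IH (ltnW kp).
  have [H [oH HQY]] := householder_step kp (leq_trans kp pn)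
    (orthonormal_cols_mulmx oQ oY) QY.
  exists (H *m Q); split; first exact: orthonormal_cols_mulmx.
  by move=> i j; rewrite ltnS -mulmxA; exact: HQY.
move=> /(_ p (leqnn p)) [Q [oQ QY]]; exists Q; split => // i j; exact: QY.
Qed.

End Householder.

Lemma measurable_forall_in_itv d (T : measurableType d) (R : realType) (I : finType)
    (f : I -> T -> R) (J : I -> interval R) :
  (forall i, measurable_fun setT (f i)) -> measurable [set t | forall i, f i t \in J i].
Proof.
move=> mf; rewrite (_ : [set t | _] = \bigcap_(i in [set: I]) (f i @^-1` [set` J i])).
  apply: fin_bigcap_measurable; first exact: finite_finset.
  by move=> i _; rewrite -(setTI (_ @^-1` _)); exact: mf.
by apply/seteqP; split => t /= h i; [move=> _|]; exact: h.
Qed.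

Section MatrixEntries.
Variables (R : realType) (n p : nat).

Lemma rmat_ofE (M : 'M[R]_(n, p)) i j : tnth (tnth (rmat_of M) i) j = M i j.
Proof. by rewrite !tnth_mktuple. Qed.

Lemma mx_ofE (t : rmat R n p) i j : mx_of t i j = tnth (tnth t i) j.
Proof. by rewrite mxE. Qed.

Lemma measurable_entry i j :
  measurable_fun setT (fun t : rmat R n p => tnth (tnth t i) j).
Proof. exact: measurableT_comp (measurable_tnth j) (measurable_tnth i). Qed.

Lemma measurable_mulmx_entry (Q : 'M[R]_n) i j :
  measurable_fun setT (fun t : rmat R n p => (Q *m mx_of t) i j).
Proof.
rewrite (_ : (fun t => _) = fun t : rmat R n p =>
    \sum_(k <- index_enum 'I_n) Q i k * tnth (tnth t k) j).
  by apply: measurable_sum => k; apply: measurable_funM => //; exact: measurable_entry.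
by apply/funext => t; rewrite mxE; apply: eq_bigr => k _; rewrite mx_ofE.
Qed.

(* Boxes are indexed by integer grid points, so countably many of them
   (enumerated through unpickle) cover the space. *)
Definition box (δ : R) (z : {ffun 'I_n * 'I_p -> int}) : set (rmat R n p) :=
  [set t | forall ij : 'I_n * 'I_p, tnth (tnth t ij.1) ij.2 \in
     `](z ij)%:~R * δ - δ, (z ij)%:~R * δ + δ[].

Lemma measurable_box δ z : measurable (box δ z).
Proof. by apply: measurable_forall_in_itv => ij; exact: measurable_entry. Qed.

Definition box_seq δ (k : nat) : set (rmat R n p) :=
  if unpickle k is Some z then box δ z else set0.

Lemma box_seq_cover δ : 0 < δ -> [set: rmat R n p] `<=` \bigcup_k box_seq δ k.
Proof.
move=> d0 t _.
pose z : {ffun 'I_n * 'I_p -> int} :=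
  [ffun ij => Num.floor (tnth (tnth t ij.1) ij.2 / δ)].
exists (pickle z) => //; rewrite /box_seq pickleK => ij; rewrite ffunE in_itv /=.
set x := tnth (tnth t ij.1) ij.2.
have := floor_itv (x / δ); rewrite intrD /=.
set F := (Num.floor (x / δ))%:~R => /andP[lb ub].
have x_eq : x = x / δ * δ by rewrite divfK ?gt_eqF.
by apply/andP; split; nra.
Qed.

Lemma probability_box_gt0 (mu : probability (rmat R n p) R) δ :
  0 < δ -> exists z, (0 < mu (box δ z))%E.
Proof.
move=> d0; apply: contrapT => nobox.
have box_seq0 k : mu (box_seq δ k) = 0%E.
  rewrite /box_seq; case: unpickle => [z|]; last exact: measure0.
  apply/eqP; rewrite eq_le measure_ge0 andbT leNgt; apply/negP => z0.
  by apply: nobox; exists z.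
have mbox k : measurable (box_seq δ k).
  by rewrite /box_seq; case: unpickle => [z|//]; exact: measurable_box.
have := measure_sigma_subadditive mu mbox measurableT (box_seq_cover d0).
rewrite eseries0 => [|k _ _]; last exact: box_seq0.
move=> mu0; have : (1 <= 0 :> \bar R)%E by rewrite -(probability_setT mu).
by rewrite lee_fin ler10.
Qed.

End MatrixEntries.

Section HaarDiagonal.
Variables (R : realType) (n p : nat) (hnp : (p <= n)%N).
Variable mu : probability (rmat R n p) R.
Hypothesis hmu : stiefel_haar mu.

Definition diag_ge (c : R) : set (rmat R n p) :=
  [set t | forall j : 'I_p, diag_entry hnp t j \in `[c, +oo[].

Lemma measurable_diag_ge c : measurable (diag_ge c).
Proof. by apply: measurable_forall_in_itv => j; exact: measurable_entry. Qed.

Lemma measurable_diag_ge_mulmx (Q : 'M[R]_n) c :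
  measurable ((fun t => rmat_of (Q *m mx_of t)) @^-1` diag_ge c).
Proof.
rewrite (_ : _ @^-1` _ = [set t | forall j : 'I_p,
    (Q *m mx_of t) (widen_ord hnp j) j \in `[c, +oo[]).
  by apply: measurable_forall_in_itv => j; exact: measurable_mulmx_entry.
by apply/funext => t; rewrite /preimage /diag_ge /diag_entry /=;
   under eq_forall do rewrite rmat_ofE.
Qed.

Lemma stiefel_box_gt0 δ : 0 < δ ->
  exists z Y, [/\ (0 < mu (box δ z))%E, box δ z Y & stiefel Y].
Proof.
move=> d0; have [z z0] := probability_box_gt0 mu d0.
have [N [mN N0 notN]] := hmu.1.
suff [Y zY YN] : exists2 Y, box δ z Y & ~ N Y.
  by exists z, Y; split => //; apply: contrapT => nY; exact: YN (notN _ nY).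
apply: contrapT => boxN.
have : box δ z `<=` N by move=> t zt; apply: contrapT => Nt; apply: boxN; exists t.
move=> /(le_measure mu (mem_set (measurable_box δ z)) (mem_set mN)) zN.
have : (0 < 0 :> \bar R)%E by rewrite -[X in (_ < X)%E]N0; exact: lt_le_trans z0 zN.
by rewrite ltxx.
Qed.

(* Entries of two points of a box differ by less than 2 δ, so the entries of
   their images under Q differ by at most 2 n δ: those of Q are bounded by 1. *)
Lemma box_sub_diag_ge (Q : 'M[R]_n) (Y : rmat R n p) δ z eps :
  orthonormal_cols Q -> (forall i j, (Q *m mx_of Y) i j = ((i : nat) == j)%:R) ->
  box δ z Y -> n%:R * (2 * δ) <= eps ->
  box δ z `<=` (fun t => rmat_of (Q *m mx_of t)) @^-1` diag_ge (1 - eps).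
Proof.
move=> oQ QY zY deps t zt j; rewrite /= /diag_entry rmat_ofE in_itv /= andbT.
set w := widen_ord hnp j.
have -> : (Q *m mx_of t) w j =
    (Q *m mx_of Y) w j + \sum_k Q w k * (mx_of t k j - mx_of Y k j).
  by rewrite !mxE -big_split; apply: eq_bigr => k _ /=; ring.
have : `|\sum_k Q w k * (mx_of t k j - mx_of Y k j)| <= n%:R * (2 * δ).
  apply: le_trans (ler_norm_sum _ _ _) _.
  rewrite mulr_natl -[X in _ *+ X](card_ord n) -sumr_const.
  apply: ler_sum => k _; rewrite normrM -[2 * δ]mul1r.
  apply: ler_pM => //; first exact: orthonormal_cols_entry_le1.
  move: (zt (k, j)) (zY (k, j)); rewrite /= !in_itv /= !mx_ofE.
  by move=> /andP[t1 t2] /andP[y1 y2]; rewrite ler_norml; apply/andP; split; lra.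
by rewrite QY /= eqxx mulr1n ler_norml => /andP[lb _]; lra.
Qed.

Lemma haar_diag_ge_gt0 eps : 0 < eps -> (0 < mu (diag_ge (1 - eps)))%E.
Proof.
move=> eps0; have n1 : 0 < n%:R + 1 :> R by rewrite ltr_wpDl.
pose δ := eps / (2 * (n%:R + 1)).
have d0 : 0 < δ by rewrite divr_gt0 // mulr_gt0.
have deps : n%:R * (2 * δ) <= eps.
  have -> : n%:R * (2 * δ) = eps * (n%:R / (n%:R + 1)).
    by rewrite /δ; field; rewrite gt_eqF.
  by apply: ler_piMr; [exact: ltW | rewrite ler_pdivrMr // mul1r lerDl].
have [z [Y [z0 zY sY]]] := stiefel_box_gt0 d0.
have [Q [oQ QY]] := orthonormal_cols_to_canonical hnp sY.
rewrite -(hmu.2 Q oQ _ (measurable_diag_ge _)).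
apply: lt_le_trans z0 (le_measure _ _ _ (box_sub_diag_ge oQ QY zY deps)).
- exact: mem_set (measurable_box δ z).
- exact: mem_set (measurable_diag_ge_mulmx Q _).
Qed.

Definition diag_mass (c : R) : R := fine (mu (diag_ge c)).

Lemma diag_massE c : mu (diag_ge c) = (diag_mass c)%:E.
Proof. by rewrite fineK // fin_num_measure //; exact: measurable_diag_ge. Qed.

Lemma diag_mass_gt0 eps : 0 < eps -> 0 < diag_mass (1 - eps).
Proof. by move=> /haar_diag_ge_gt0; rewrite diag_massE lte_fin. Qed.

End HaarDiagonal.

Section Hyp0F1Bounds.
Variables (R : realType) (n p : nat) (hnp : (p <= n)%N).
Variable mu : probability (rmat R n p) R.

Lemma measurable_hyp0F1_integrand (d : p.-tuple R) :
  measurable_fun setT (fun t : rmat R n p =>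
     (expR (\sum_(j < p) tnth d j * diag_entry hnp t j))%:E).
Proof.
apply/measurable_EFinP; apply: measurableT_comp => //.
by apply: measurable_sum => j; apply: measurable_funM => //; exact: measurable_entry.
Qed.

Lemma hyp0F1_le (d : p.-tuple R) :
  mu.-negligible (~` @stiefel R n p) -> positive_tuple d ->
  (hyp0F1 hnp mu d <= (expR (\sum_(j < p) tnth d j))%:E)%E.
Proof.
move=> [N [mN N0 notN]] d0.
apply: le_trans (@ae_ge0_le_integral _ _ _ mu setT measurableT _
  (fun=> (expR (\sum_(j < p) tnth d j))%:E) _ _ _ _ _) _.
- by move=> t _; rewrite lee_fin expR_ge0.
- exact: measurable_hyp0F1_integrand.
- by move=> t _; rewrite lee_fin expR_ge0.
- exact: measurable_cst.
- exists N; split => // t /= le_t; apply: notN => /= st; apply: le_t => _.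
  rewrite lee_fin ler_expR; apply: ler_sum => j _.
  rewrite -[X in _ <= X]mulr1; apply: ler_wpM2l; first exact: ltW.
  apply: le_trans (ler_norm _) _; rewrite /diag_entry -mx_ofE.
  exact: orthonormal_cols_entry_le1.
rewrite integral_cst //= [X in (_ * X <= _)%E](_ : _ = 1%E) ?mule1 //.
exact: probability_setT.
Qed.

Lemma hyp0F1_ge c (d : p.-tuple R) : positive_tuple d ->
  ((diag_mass hnp mu c * expR (c * \sum_(j < p) tnth d j))%:E
     <= hyp0F1 hnp mu d)%E.
Proof.
move=> d0; rewrite EFinM -diag_massE muleC.
rewrite -(integral_cst mu (measurable_diag_ge hnp c)
                        (expR (c * \sum_(j < p) tnth d j))%:E).
apply: le_trans (ge0_subset_integral mu (measurable_diag_ge hnp c) measurableT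
  (measurable_hyp0F1_integrand d) (fun t _ => expR_ge0 _) (@subsetT _ _)).
apply: ge0_le_integral_nomeas => t ct; first by rewrite lee_fin expR_ge0.
rewrite lee_fin ler_expR mulr_sumr; apply: ler_sum => j _.
move: (ct j); rewrite in_itv /= andbT mulrC => cj.
by apply: ler_wpM2l; first exact: ltW.
Qed.

Lemma fine_hyp0F1_bounds eps (d : p.-tuple R) :
  stiefel_haar mu -> 0 < eps -> positive_tuple d ->
  0 < diag_mass hnp mu (1 - eps) * expR ((1 - eps) * \sum_(j < p) tnth d j)
    <= fine (hyp0F1 hnp mu d) /\
  fine (hyp0F1 hnp mu d) <= expR (\sum_(j < p) tnth d j).
Proof.
move=> hmu eps0 d0.
have lo := hyp0F1_ge (1 - eps) d0; have up := hyp0F1_le hmu.1 d0.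
have c0 := diag_mass_gt0 hnp hmu eps0.
move: lo up; case: (hyp0F1 hnp mu d) => [F| |] //=.
by rewrite !lee_fin mulr_gt0 ?expR_gt0 // => -> ->.
Qed.

End Hyp0F1Bounds.

Section GBounds.
Variables (R : realType) (n p : nat) (hnp : (p <= n)%N).
Variable mu : probability (rmat R n p) R.
Hypothesis hmu : stiefel_haar mu.
Variables (nu : R) (eta : p.-tuple R).
Hypothesis nu0 : 0 < nu.

Definition g_rate (c : R) (j : nat) : R := nu * (nth 0 eta j - c).

Lemma sum_g_rate c (d : p.-tuple R) :
  \sum_(j < p) g_rate c j * tnth d j =
  nu * (\sum_(j < p) tnth eta j * tnth d j) - nu * (c * \sum_(j < p) tnth d j).
Proof.
rewrite !mulr_sumr -sumrB; apply: eq_bigr => j _.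
by rewrite /g_rate (tnth_nth 0 eta); ring.
Qed.

Lemma g_fun_ge0 d : 0 <= g_fun hnp mu nu eta d.
Proof. by rewrite divr_ge0 ?expR_ge0 ?powR_ge0. Qed.

Lemma g_fun_le eps d : 0 < eps -> positive_tuple d ->
  g_fun hnp mu nu eta d <=
  (diag_mass hnp mu (1 - eps) `^ nu)^-1 *
    expR (\sum_(j < p) g_rate (1 - eps) j * tnth d j).
Proof.
move=> eps0 d0; have [/andP[L0 lo] _] := fine_hyp0F1_bounds hnp hmu eps0 d0.
have c0 := diag_mass_gt0 hnp hmu eps0.
set F := fine _ in lo *; set c := diag_mass _ _ _ in L0 lo c0 *.
have F0 : 0 < F := lt_le_trans L0 lo.
rewrite /g_fun -/F sum_g_rate expRD expRN mulrCA -invfM.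
rewrite ler_pM2l ?expR_gt0 // lef_pV2 ?posrE ?mulr_gt0 ?powR_gt0 ?expR_gt0 //.
rewrite [nu * _]mulrC expRM -powRM ?expR_ge0 //; last exact: ltW.
by apply: (ge0_ler_powR (ltW nu0)) lo; rewrite nnegrE ltW.
Qed.

Lemma g_fun_ge d : positive_tuple d ->
  expR (\sum_(j < p) g_rate 1 j * tnth d j) <= g_fun hnp mu nu eta d.
Proof.
move=> d0; have eps0 : 0 < 1 / 2 :> R by rewrite divr_gt0.
have [/andP[L0 lo] up] := fine_hyp0F1_bounds hnp hmu eps0 d0.
set F := fine _ in lo up *; have F0 : 0 < F := lt_le_trans L0 lo.
rewrite /g_fun -/F sum_g_rate mul1r expRD expRN ler_pM2l ?expR_gt0 //.
rewrite lef_pV2 ?posrE ?powR_gt0 ?expR_gt0 // mulrC expRM.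
by apply: (ge0_ler_powR (ltW nu0)) up; rewrite nnegrE ?expR_ge0 ?(ltW F0).
Qed.

Let g_int := int_Rplus (fun d : p.-tuple R => (g_fun hnp mu nu eta d)%:E).

Lemma int_Rplus_g_fun_pinfty j : 1 <= tnth eta j -> g_int = +oo%E.
Proof.
move=> eta1; apply/eqP; rewrite eq_le leey /=.
rewrite -(prod_int_expR_Rplus_pinfty (a := g_rate 1) (ltn_ord j)); last first.
  by rewrite /g_rate -tnth_nth; apply: mulr_ge0; rewrite ?subr_ge0 ?(ltW nu0).
rewrite -[X in (X <= _)%E]mul1e -int_Rplus_expR_sum //.
apply: le_int_Rplus => e e0; rewrite lee_fin mul1r ?expR_ge0 //.
exact: g_fun_ge.
Qed.

Lemma int_Rplus_g_fun_lty : (forall j, tnth eta j < 1) -> (g_int < +oo)%E.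
Proof.
move=> eta_lt1.
pose m := \big[Num.min/1]_(j < p) (1 - tnth eta j).
have m0 : 0 < m.
  by elim/big_ind: m => // [x y x0 y0|j _]; rewrite ?lt_min ?x0 // subr_gt0.
have m_le j : m <= 1 - tnth eta j by rewrite /m (bigD1 j) //= ge_min lexx.
have eps0 : 0 < m / 2 by rewrite divr_gt0.
have c0 := powR_gt0 nu (diag_mass_gt0 hnp hmu eps0).
apply: le_lt_trans (le_int_Rplus (g := fun d => ((_ `^ nu)^-1 *
  expR (\sum_(j < p) g_rate (1 - m / 2) j * tnth d j))%:E) _ _) _.
- by move=> e _; rewrite lee_fin g_fun_ge0.
- by move=> e e0; rewrite lee_fin; exact: g_fun_le.
rewrite int_Rplus_expR_sum ?invr_ge0 ?ltW //.
apply: lte_mul_pinfty; rewrite ?lee_fin ?invr_ge0 ?ltW //.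
apply: prod_int_expR_Rplus_lty => k kp; rewrite pmulr_rlt0 //.
by have := m_le (Ordinal kp); rewrite (tnth_nth 0) /=; lra.
Qed.

End GBounds.

Theorem theorem2 (R : realType) (n p : nat) (hnp : (p <= n)%N)
  (mu : probability (rmat R n p) R) (hmu : stiefel_haar mu)
  (nu : R) (hnu : 0 < nu) (eta : p.-tuple R) :
  (int_Rplus (fun d : p.-tuple R => (g_fun hnp mu nu eta d)%:E) < +oo)%E <->
  (forall j : 'I_p, tnth eta j < 1).
Proof.
split=> [g_lty j|]; last exact: int_Rplus_g_fun_lty.
rewrite ltNge; apply/negP => /(int_Rplus_g_fun_pinfty hnp hmu hnu) g_inf.
by rewrite g_inf ltxx in g_lty.
Qed.
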